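(* For every set $A \subseteq \mathbb{N}$, $$\underline{\underline{d}}(A) = d_*(A) \qquad\text{and}\qquad \overline{\overline{d}}(A) = d^*(A).$$
   Context: $\mathbb{N}=\{1,2,3,\dots\}$. For $A\subseteq\mathbb{N}$ let $A(n)=|A\cap[1,n]|$. Let $\mathcal{D}$ be the collection of all $A\subseteq\mathbb{N}$ for which the asymptotic density $d(A)=\lim_{n\to\infty}\frac{A(n)}{n}$ exists. Define $\underline{\underline{d}}(A)=\sup\{d(B);\ B\subseteq A,\ B\in\mathcal{D}\}$ and $\overline{\overline{d}}(A)=\inf\{d(C);\ C\supseteq A,\ C\in\mathcal{D}\}$. Define $d_*(A)=\sup \frac{\sum_{i=1}^{p}d(A_i)-\sum_{j=1}^{q}d(B_j)}{k}$, where the supremum is over all finite collections $A_1,\dots,A_p,B_1,\dots,B_q$ of sets in $\mathcal{D}$ and positive integers $k$ such that $k\chi_A+\sum_{j=1}^q\chi_{B_j}\ge\sum_{i=1}^p\chi_{A_i}$ pointwise on $\mathbb{N}$ ($\chi$ denotes the characteristic function). Define $d^*(A)=\inf \frac{\sum_{i=1}^{p}d(A_i)-\sum_{j=1}^{q}d(B_j)}{k}$, the infimum over all finite collections $A_1,\dots,A_p,B_1,\dots,B_q\in\mathcal{D}$ and positive integers $k$ such that $k\chi_A+\sum_{j=1}^q\chi_{B_j}\le\sum_{i=1}^p\chi_{A_i}$ pointwise. *)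

From HB Require Import structures.
From mathcomp Require Import all_boot all_order all_algebra.
From mathcomp Require Import all_classical all_reals all_analysis.
Set Implicit Arguments. Unset Strict Implicit. Unset Printing Implicit Defensive.
Import Order.TTheory GRing.Theory Num.Theory.
Import numFieldNormedType.Exports.
Local Open Scope classical_set_scope.
Local Open Scope ring_scope.

(* N = {1,2,3,...} is represented as the positive naturals. *)
Definition posn : set nat := [set n | (0 < n)%N].

Definition cnt (R : realType) (A : set nat) (n : nat) : R :=
  \sum_(1 <= i < n.+1) (\1_A i : R).

Definition has_density (R : realType) (A : set nat) (l : R) : Prop :=
  (fun n : nat => @cnt R A n / n%:R) @ \oo --> l.

Definition inD (R : realType) (B : set nat) (l : R) : Prop :=
  B `<=` posn /\ has_density B l.

Definition lower_vals (R : realType) (A : set nat) : set R :=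
  [set x | exists B, B `<=` A /\ inD B x].

Definition upper_vals (R : realType) (A : set nat) : set R :=
  [set x | exists C, A `<=` C /\ inD C x].

Definition all_inD (R : realType) (s : seq (set nat * R)) : Prop :=
  forall p, p \in s -> inD p.1 p.2.

Definition sum_chi (R : realType) (s : seq (set nat * R)) (n : nat) : R :=
  \sum_(p <- s) (\1_(p.1) n : R).

Definition sum_d (R : realType) (s : seq (set nat * R)) : R :=
  \sum_(p <- s) p.2.

Definition dstar_lower_vals (R : realType) (A : set nat) : set R :=
  [set x | exists (As Bs : seq (set nat * R)) (k : nat),
     (0 < k)%N /\ all_inD As /\ all_inD Bs /\
     (forall n, (0 < n)%N ->
        sum_chi As n <= k%:R * (\1_A n : R) + sum_chi Bs n) /\
     x = (sum_d As - sum_d Bs) / k%:R].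

Definition dstar_upper_vals (R : realType) (A : set nat) : set R :=
  [set x | exists (As Bs : seq (set nat * R)) (k : nat),
     (0 < k)%N /\ all_inD As /\ all_inD Bs /\
     (forall n, (0 < n)%N ->
        k%:R * (\1_A n : R) + sum_chi Bs n <= sum_chi As n) /\
     x = (sum_d As - sum_d Bs) / k%:R].

Definition ddlower (R : realType) (A : set nat) : R := sup (@lower_vals R A).
Definition ddupper (R : realType) (A : set nat) : R := inf (@upper_vals R A).
Definition dlow_star (R : realType) (A : set nat) : R := sup (@dstar_lower_vals R A).
Definition dup_star (R : realType) (A : set nat) : R := inf (@dstar_upper_vals R A).

From mathcomp Require Import all_boot all_order all_algebra.
From mathcomp Require Import all_classical all_reals all_analysis.
From mathcomp Require Import lra.
Import Order.TTheory GRing.Theory Num.Theory.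
Import numFieldNormedType.Exports.
Local Open Scope classical_set_scope.
Local Open Scope ring_scope.

(* Every certificate for [d_*] (resp. [d^*]) yields a function
   [F n = (sum_i A_i(n) - sum_j B_j(n)) / k] with [F n / n] converging to the
   certified value and with increments bounded by [\1_A] (resp. bounded below
   by it).  A greedy subset of [A], which takes [n] whenever [n \in A] and its
   count lags behind [F n], then has exactly that density; for [d^*] one runs
   the same construction on the complement of [A] with [n - F n].  Hence every
   nonnegative value of [d_*]'s set is attained by a subset of [A], every value
   [<= 1] of [d^*]'s set by a superset, and the suprema and infima agree. *)

Section Densities.
Context {R : realType}.
Implicit Types (A B S : set nat) (s As Bs : seq (set nat * R)).

Lemma cvg_natP (u : nat -> R) (l : R) : u @ \oo --> l <->
  forall e, 0 < e -> exists N, forall n, (N <= n)%N -> `|l - u n| < e.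
Proof.
rewrite cvgrPdist_lt; split=> u_l e e_gt0.
  by have [N _ uN] := u_l e e_gt0; exists N.
by have [N uN] := u_l e e_gt0; exists N.
Qed.

Lemma cvg_eq_pos (u v : nat -> R) (l : R) :
  (forall n, (0 < n)%N -> u n = v n) -> v @ \oo --> l -> u @ \oo --> l.
Proof.
move=> uv v_l; apply: cvg_trans v_l; apply: near_eq_cvg.
by near=> n; apply/esym/uv; near: n; exists 1%N.
Unshelve. all: by end_near.
Qed.

Lemma ltr_distl_div (a x e z : R) : 0 < z ->
  (`|a - x / z| < e) = ((a - e) * z < x < (a + e) * z).
Proof. by move=> z_gt0; rewrite ltr_distlC ltr_pdivlMr // ltr_pdivrMr. Qed.

Lemma indic_ge0_le1 A n : 0 <= (\1_A n : R) <= 1.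
Proof. by rewrite indicE; case: (n \in A); rewrite /= ?lexx ?ler01. Qed.

Lemma indic_le_subset A B n : A `<=` B -> (\1_A n : R) <= \1_B n.
Proof.
move=> AB; rewrite !indicE; case: (boolP (n \in A)) => [/set_mem An|_] /=.
  by rewrite mem_set //; apply: AB.
by case: (n \in B).
Qed.

Lemma cnt0 A : cnt R A 0 = 0.
Proof. by rewrite /cnt big_geq. Qed.

Lemma cntS A n : cnt R A n.+1 = cnt R A n + \1_A n.+1.
Proof. by rewrite /cnt big_nat_recr. Qed.

Lemma cnt_ge0_le A n : 0 <= cnt R A n <= n%:R.
Proof.
elim: n => [|n IH]; first by rewrite cnt0 lexx.
by rewrite cntS -natr1; have := indic_ge0_le1 A n.+1; lra.
Qed.

Lemma has_density_ge0_le1 B (l : R) : has_density B l -> 0 <= l <= 1.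
Proof.
move=> B_l; rewrite -(cvg_lim _ B_l) //; apply/andP; split.
  apply: limr_ge; first by apply/cvg_ex; exists l.
  by near=> n; rewrite divr_ge0 // (andP (cnt_ge0_le B n)).1.
apply: limr_le; first by apply/cvg_ex; exists l.
near=> n; rewrite ler_pdivrMr ?mul1r ?(andP (cnt_ge0_le B n)).2 // ltr0n.
by near: n; exists 1%N.
Unshelve. all: by end_near.
Qed.

Lemma has_density_set0 : has_density set0 (0 : R).
Proof.
apply: (@cvg_eq_pos _ (fun=> 0)); last exact: cvg_cst.
move=> n _; suff -> : cnt R set0 n = 0 by rewrite mul0r.
by elim: n => [|n IH]; rewrite ?cnt0 // cntS IH indicE in_set0 addr0.
Qed.

Lemma cnt_posn n : cnt R posn n = n%:R.
Proof.
elim: n => [|n IH]; first by rewrite cnt0.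
by rewrite cntS IH indicE mem_set //= natr1.
Qed.

Lemma has_density_posn : has_density posn (1 : R).
Proof.
apply: (@cvg_eq_pos _ (fun=> 1)); last exact: cvg_cst.
by move=> n n_gt0; rewrite cnt_posn divff // pnatr_eq0 -lt0n.
Qed.

Lemma cnt_posnD B n : B `<=` posn -> cnt R (posn `\` B) n = n%:R - cnt R B n.
Proof.
move=> Bpos; elim: n => [|n IH]; first by rewrite !cnt0 subrr.
rewrite !cntS IH !indicE -natr1.
case: (boolP (n.+1 \in B)) => [/set_mem Bn|nBn].
  by rewrite memNset /=; [lra | case].
by rewrite mem_set /=; [lra | split => // /mem_set Bn; rewrite Bn in nBn].
Qed.

Lemma has_density_posnD B (l : R) : B `<=` posn -> has_density B l ->
  has_density (posn `\` B) (1 - l).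
Proof.
move=> Bpos B_l; apply: (@cvg_eq_pos _ (fun n => 1 - cnt R B n / n%:R)).
  by move=> n n_gt0; rewrite cnt_posnD // mulrBl divff // pnatr_eq0 -lt0n.
by apply: cvgB => //; apply: cvg_cst.
Qed.

Section Greedy.
Variables (S : set nat) (F : nat -> R).

Fixpoint greedy_count n : nat :=
  if n is m.+1 then
    if (n \in S) && ((greedy_count m)%:R < F n) then (greedy_count m).+1
    else greedy_count m
  else 0.

Definition greedy_set : set nat :=
  [set n | (0 < n)%N /\ n \in S /\ (greedy_count n.-1)%:R < F n].

Lemma greedy_set_sub : greedy_set `<=` S.
Proof. by move=> n [_ [/set_mem]]. Qed.

Lemma greedy_set_sub_posn : greedy_set `<=` posn.
Proof. by move=> n []. Qed.

Lemma cnt_greedy_set n : cnt R greedy_set n = (greedy_count n)%:R.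
Proof.
elim: n => [|n IH]; first by rewrite cnt0.
rewrite cntS IH /= indicE.
have -> : (n.+1 \in greedy_set) = (n.+1 \in S) && ((greedy_count n)%:R < F n.+1).
  apply/idP/andP; first by rewrite inE => -[_ []].
  by case=> Sn lt_gF; rewrite inE.
by case: ifP; rewrite /= ?addr0 ?natr1.
Qed.

Lemma greedy_count_witness n : greedy_count n = 0%N \/
  exists m, [/\ (0 < m)%N, (m <= n)%N & (greedy_count n)%:R < F m + 1].
Proof.
elim: n => [|n IH]; first by left.
rewrite /=; case: ifP => [/andP[_ lt_gF]|_].
  by right; exists n.+1; split => //; rewrite -natr1 ltrD2r.
case: IH => [->|[m [m_gt0 le_mn lt_gF]]]; first by left.
by right; exists m; split => //; rewrite (leq_trans le_mn).
Qed.

Hypotheses (F0 : F 0 = 0) (F_step : forall n, F n.+1 - F n <= \1_S n.+1).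

Lemma greedy_count_ge n : F n - 1 <= (greedy_count n)%:R.
Proof.
elim: n => [|n IH]; first by rewrite F0 /=; lra.
have := F_step n; rewrite /= indicE.
case: (boolP (n.+1 \in S)) => Sn /=; last lra.
case: ifP => /= [_|/negbT]; first by rewrite -natr1; lra.
by rewrite -leNgt; lra.
Qed.

Lemma F_le_nat n : F n <= n%:R.
Proof.
elim: n => [|n IH]; first by rewrite F0.
by have := F_step n; have := indic_ge0_le1 S n.+1; rewrite -natr1; lra.
Qed.

(* The greedy count stays above [F n - 1] and below [1 + F m] for some
   [m <= n], so it inherits the asymptotic slope of [F]. *)
Lemma has_density_greedy_set (a : R) : 0 <= a ->
  (fun n => F n / n%:R) @ \oo --> a -> has_density greedy_set a.
Proof.
move=> a_ge0 /cvg_natP F_a; rewrite /has_density.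
under eq_fun do rewrite cnt_greedy_set.
apply/cvg_natP => e e_gt0.
have e2_gt0 : 0 < e / 2 by rewrite divr_gt0.
have [N1 FN1] := F_a (e / 2) e2_gt0.
have [N2 _ N2n] := nbhs_infty_ger (2 * (N1%:R + 1) / e + 1).
exists (maxn (maxn N1 N2) 1) => n; rewrite !geq_max => /andP[/andP[N1n N2n'] n_gt0].
have n_pos : 0 < (n%:R : R) by rewrite ltr0n.
have e_n : 2 * (N1%:R + 1) < n%:R * e.
  by rewrite -ltr_pdivrMr //; have := N2n _ N2n'; lra.
have N1_ge0 : (0 : R) <= N1%:R by [].
have := FN1 n N1n; rewrite ltr_distl_div // => /andP[Fn_lo Fn_hi].
have g_lo := greedy_count_ge n.
rewrite ltr_distl_div //; apply/andP; split; first by move: Fn_lo; rewrite !mulrBl; nra.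
case: (greedy_count_witness n) => [->|[m [m_gt0 le_mn g_hi]]].
  by rewrite mulr_gt0 //; lra.
have le_mn' : (m%:R : R) <= n%:R by rewrite ler_nat.
case: (leqP N1 m) => [N1m|ltmN1].
  have := FN1 m N1m; rewrite ltr_distl_div ?ltr0n // => /andP[_ Fm_hi].
  have : (a + e / 2) * m%:R <= (a + e / 2) * n%:R by rewrite ler_wpM2l //; lra.
  nra.
have : (m%:R : R) <= N1%:R by rewrite ler_nat ltnW.
have := F_le_nat m; nra.
Qed.

End Greedy.

Definition sum_cnt s n : R := \sum_(p <- s) cnt R p.1 n.

Lemma sum_cnt_cvg s : all_inD s -> (fun n => sum_cnt s n / n%:R) @ \oo --> sum_d s.
Proof.
rewrite /sum_d; elim: s => [|p s IH] s_D.
  by under eq_fun do rewrite /sum_cnt big_nil mul0r; rewrite big_nil; apply: cvg_cst.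
under eq_fun do rewrite /sum_cnt big_cons mulrDl.
rewrite big_cons; apply: cvgD; first by have [] := s_D p (mem_head _ _).
by apply: IH => q sq; apply: s_D; rewrite inE sq orbT.
Qed.

Definition net_cnt As Bs k n : R := (sum_cnt As n - sum_cnt Bs n) / k%:R.

Lemma net_cnt0 As Bs k : net_cnt As Bs k 0 = 0.
Proof. by rewrite /net_cnt /sum_cnt !big1 ?subrr ?mul0r // => p _; rewrite cnt0. Qed.

Lemma net_cnt_step As Bs k n : net_cnt As Bs k n.+1 - net_cnt As Bs k n =
  (sum_chi As n.+1 - sum_chi Bs n.+1) / k%:R.
Proof.
rewrite /net_cnt /sum_cnt /sum_chi -mulrBl; congr (_ * _).
rewrite (eq_bigr (fun p => cnt R p.1 n + \1_(p.1) n.+1)) => [|p _]; last exact: cntS.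
rewrite (eq_bigr (fun p => cnt R p.1 n + \1_(p.1) n.+1) (r := Bs)) => [|p _]; last exact: cntS.
rewrite !big_split /=; lra.
Qed.

Lemma net_cnt_cvg As Bs k : all_inD As -> all_inD Bs ->
  (fun n => net_cnt As Bs k n / n%:R) @ \oo --> (sum_d As - sum_d Bs) / k%:R.
Proof.
move=> As_D Bs_D; apply: (@cvg_eq_pos _
  (fun n => (sum_cnt As n / n%:R - sum_cnt Bs n / n%:R) / k%:R)).
  by move=> n _; rewrite /net_cnt !mulrBl -!mulrA [_^-1 * _]mulrC.
by apply: cvgMr_tmp; apply: cvgB; apply: sum_cnt_cvg.
Qed.

Lemma sup_eq_cofinal (X Y : set R) : X `<=` Y -> has_sup X ->
  (forall y, Y y -> exists2 x, X x & y <= x) -> sup X = sup Y.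
Proof.
move=> XY [[x0 Xx0] X_ub] YX.
have Y_le_supX : ubound Y (sup X).
  by move=> y /YX[x Xx le_yx]; apply: le_trans le_yx (ub_le_sup X_ub Xx).
apply/le_anti/andP; split; last by apply: ge_sup Y_le_supX; exists x0; apply: XY.
apply: ge_sup; first by exists x0.
by move=> x Xx; apply: ub_le_sup (XY _ Xx); exists (sup X).
Qed.

Lemma inf_eq_coinitial (X Y : set R) : X `<=` Y -> has_inf X ->
  (forall y, Y y -> exists2 x, X x & x <= y) -> inf X = inf Y.
Proof.
move=> XY [[x0 Xx0] X_lb] YX.
have infX_le_Y : lbound Y (inf X).
  by move=> y /YX[x Xx le_xy]; apply: le_trans le_xy; apply: ge_inf Xx.
apply/le_anti/andP; split; first by apply: lb_le_inf infX_le_Y; exists x0; apply: XY.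
apply: lb_le_inf; first by exists x0.
by move=> x Xx; apply: ge_inf (XY _ Xx); exists (inf X).
Qed.

Lemma lower_vals0 A : lower_vals A (0 : R).
Proof. by exists set0; split=> //; split; [exact: sub0set | exact: has_density_set0]. Qed.

Lemma upper_vals1 A : A `<=` posn -> upper_vals A (1 : R).
Proof. by move=> Apos; exists posn; split=> //; split=> //; exact: has_density_posn. Qed.

Lemma lower_vals_sub A : @lower_vals R A `<=` dstar_lower_vals A.
Proof.
move=> x [B [BA B_x]]; exists [:: (B, x)], [::], 1%N; split=> //; split.
  by move=> p; rewrite mem_seq1 => /eqP ->.
split=> //; split; last by rewrite /sum_d big_seq1 big_nil subr0 divr1.
by move=> n _; rewrite /sum_chi big_seq1 big_nil addr0 mul1r indic_le_subset.
Qed.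

Lemma upper_vals_sub A : @upper_vals R A `<=` dstar_upper_vals A.
Proof.
move=> x [C [AC C_x]]; exists [:: (C, x)], [::], 1%N; split=> //; split.
  by move=> p; rewrite mem_seq1 => /eqP ->.
split=> //; split; last by rewrite /sum_d big_seq1 big_nil subr0 divr1.
by move=> n _; rewrite /sum_chi big_seq1 big_nil addr0 mul1r indic_le_subset.
Qed.

Lemma dstar_lower_vals_lower_vals A x :
  @dstar_lower_vals R A x -> 0 <= x -> lower_vals A x.
Proof.
move=> [As [Bs [k [k_gt0 [As_D [Bs_D [cover ->]]]]]]] x_ge0.
exists (greedy_set A (net_cnt As Bs k)); split; first exact: greedy_set_sub.
split; first exact: greedy_set_sub_posn.
apply: has_density_greedy_set => //; [exact: net_cnt0 | | exact: net_cnt_cvg].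
move=> n; rewrite net_cnt_step ler_pdivrMr ?ltr0n //.
by have := cover n.+1 isT; rewrite mulrC; lra.
Qed.

(* The superset is the complement of a greedy subset of [~` A] that tracks
   [n - F n], with [F] the net count of the certificate. *)
Lemma dstar_upper_vals_upper_vals A x : A `<=` posn ->
  @dstar_upper_vals R A x -> x <= 1 -> upper_vals A x.
Proof.
move=> Apos [As [Bs [k [k_gt0 [As_D [Bs_D [cover ->]]]]]]] x_le1.
set y := (_ / _); set G := fun n => n%:R - net_cnt As Bs k n.
have G_step n : G n.+1 - G n <= \1_(~` A) n.+1.
  have -> : G n.+1 - G n = 1 - (net_cnt As Bs k n.+1 - net_cnt As Bs k n).
    by rewrite /G -natr1; lra.
  have : (\1_A n.+1 : R) <= (sum_chi As n.+1 - sum_chi Bs n.+1) / k%:R.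
    by rewrite ler_pdivlMr ?ltr0n //; have := cover n.+1 isT; rewrite mulrC; lra.
  by rewrite net_cnt_step indicC indicE; case: (n.+1 \in A) => /=; lra.
have G_cvg : (fun n => G n / n%:R) @ \oo --> 1 - y.
  apply: (@cvg_eq_pos _ (fun n => 1 - net_cnt As Bs k n / n%:R)).
    by move=> n n_gt0; rewrite /G mulrBl divff // pnatr_eq0 -lt0n.
  by apply: cvgB; [exact: cvg_cst | exact: net_cnt_cvg].
exists (posn `\` greedy_set (~` A) G); split.
  by move=> n An; split; [exact: Apos | move/greedy_set_sub].
split; first by move=> n [].
rewrite -[y](subKr 1); apply: has_density_posnD; first exact: greedy_set_sub_posn.
apply: (has_density_greedy_set _ _ _ G_step _ _ G_cvg); first by rewrite /G net_cnt0 subrr.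
by rewrite subr_ge0.
Qed.

End Densities.

Theorem theorem3p2 (R : realType) (A : set nat) (hA : A `<=` posn) :
  @ddlower R A = @dlow_star R A /\ @ddupper R A = @dup_star R A.
Proof.
split.
- apply: sup_eq_cofinal (@lower_vals_sub R A) _ _.
    split; first by exists 0; exact: lower_vals0.
    by exists 1 => x [B [_ [_ /has_density_ge0_le1/andP[]]]].
  move=> y Yy; have [y_ge0|y_lt0] := leP 0 y.
    by exists y => //; exact: dstar_lower_vals_lower_vals.
  by exists 0; [exact: lower_vals0 | exact: ltW].
- apply: inf_eq_coinitial (@upper_vals_sub R A) _ _.
    split; first by exists 1; exact: upper_vals1.
    by exists 0 => x [C [_ [_ /has_density_ge0_le1/andP[]]]].
  move=> y Yy; have [y_le1|y_gt1] := leP y 1.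
    by exists y => //; exact: dstar_upper_vals_upper_vals.
  by exists 1; [exact: upper_vals1 | exact: ltW].
Qed.
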